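(* Let $\zeta=e^{2\pi i/3}$ and for $(x,y,z)\in\mathbb{R}^3$ set $b=x+\zeta y+\zeta^2z$, $c=x+\zeta^2y+\zeta z$. Define $F=(F_1,F_2,F_3):\mathbb{R}^3\to\mathbb{R}^3$ by $F_1(x,y,z)=x+y+z$, $$F_2(x,y,z)=\frac{b^2}{c}+\frac{c^2}{b}=\frac{2(x^3+y^3+z^3)+12xyz-3(x^2y+y^2x+y^2z+z^2y+z^2x+x^2z)}{x^2+y^2+z^2-(xy+yz+zx)},$$ $$F_3(x,y,z)=\frac{1}{i}\Big(\frac{b^2}{c}-\frac{c^2}{b}\Big)=\frac{-3\sqrt{3}(x-y)(y-z)(z-x)}{x^2+y^2+z^2-(xy+yz+zx)},$$ when $(x,y,z)$ is not of the form $(t,t,t)$, and $F_2(t,t,t)=F_3(t,t,t)=0$. Then for all $(x,y,z),(x',y',z')\in\mathbb{R}^3$, $F(x,y,z)=F(x',y',z')$ if and only if $(x',y',z')$ is a cyclic permutation of $(x,y,z)$.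
   Context: A cyclic permutation of $(x,y,z)$ is one of $(x,y,z)$, $(y,z,x)$, $(z,x,y)$. *)

(* R is an arbitrary real closed field (the reals are one). *)
From mathcomp Require Import all_boot all_order all_algebra.
Set Implicit Arguments. Unset Strict Implicit. Unset Printing Implicit Defensive.
Import Order.TTheory GRing.Theory Num.Theory.
Local Open Scope ring_scope.

Section Defs.
Variable R : rcfType.

Definition Qden (x y z : R) : R :=
  x ^+ 2 + y ^+ 2 + z ^+ 2 - (x * y + y * z + z * x).

Definition F1 (x y z : R) : R := x + y + z.

Definition F2 (x y z : R) : R :=
  if (x == y) && (y == z) then 0 else
  (2 * (x ^+ 3 + y ^+ 3 + z ^+ 3) + 12 * x * y * z
   - 3 * (x ^+ 2 * y + y ^+ 2 * x + y ^+ 2 * z + z ^+ 2 * y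
          + z ^+ 2 * x + x ^+ 2 * z)) / Qden x y z.

Definition F3 (x y z : R) : R :=
  if (x == y) && (y == z) then 0 else
  (- 3 * Num.sqrt 3 * (x - y) * (y - z) * (z - x)) / Qden x y z.

Definition F (x y z : R) : R * R * R := (F1 x y z, F2 x y z, F3 x y z).

Definition cyclic_perm (p q : R * R * R) : Prop :=
  let '(x, y, z) := p in
  q = (x, y, z) \/ q = (y, z, x) \/ q = (z, x, y).
End Defs.

From mathcomp Require Import all_boot all_order all_algebra.
From mathcomp Require Import ring.
Import Order.TTheory GRing.Theory Num.Theory.
Set Implicit Arguments.
Unset Strict Implicit.
Unset Printing Implicit Defensive.
Local Open Scope ring_scope.

(* Write Q = x^2 + y^2 + z^2 - (xy + yz + zx), E for the numerator of F2 and
   D = (x - y)(y - z)(z - x), so that F2 = E / Q and F3 = -3 sqrt 3 D / Q.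
   The identity E^2 + 27 D^2 = 4 Q^3 gives F2^2 + F3^2 = 4 Q (in complex terms,
   F2 + i F3 = 2 b^2 / c with |b| = |c| and |b|^2 = Q), so F determines
   x + y + z, Q, E and D, hence all elementary symmetric functions of x, y, z:
   the two triples are permutations of each other.  A transposition changes
   the sign of D, so the permutation can be chosen cyclic. *)

Section SymmetricFunctions.
Variable R : idomainType.
Implicit Types x y z : R.

Definition sigma2 x y z := x * y + y * z + z * x.
Definition sigma3 x y z := x * y * z.
Definition vandermonde x y z := (x - y) * (y - z) * (z - x).

Lemma eq_sum_mul2 (b c b' c' : R) : b + c = b' + c' -> b * c = b' * c' ->
  (b' = b /\ c' = c) \/ (b' = c /\ c' = b).
Proof.
move=> es ep.
have : (b' - b) * (b' - c) = 0.
  have -> : (b' - b) * (b' - c) = b' * (b' + c') - (b + c) * b' + b * c - b' * c'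
    by ring.
  by rewrite es ep; ring.
move/eqP; rewrite mulf_eq0 !subr_eq0 => /orP[] /eqP eb; [left | right];
  by split=> //; apply: (addrI b'); rewrite -es eb // addrC.
Qed.

Lemma root_of_sym_eq x y z x' y' z' :
  x + y + z = x' + y' + z' -> sigma2 x y z = sigma2 x' y' z' ->
  sigma3 x y z = sigma3 x' y' z' -> [\/ x' = x, x' = y | x' = z].
Proof.
move=> e1 e2 e3.
have cubicE a b c t : (t - a) * (t - b) * (t - c) =
    t ^+ 3 - (a + b + c) * t ^+ 2 + sigma2 a b c * t - sigma3 a b c.
  by rewrite /sigma2 /sigma3; ring.
have : (x' - x) * (x' - y) * (x' - z) = 0 by rewrite cubicE e1 e2 e3 -cubicE; ring.
move/eqP; rewrite !mulf_eq0 !subr_eq0 => /orP[/orP[]|] /eqP;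
  by [apply: Or31 | apply: Or32 | apply: Or33].
Qed.

Lemma vandermonde_swap x y z : vandermonde x z y = - vandermonde x y z.
Proof. by rewrite /vandermonde; ring. Qed.

Lemma vandermonde_eq0 x y z :
  vandermonde x y z = 0 -> [\/ x = y, y = z | z = x].
Proof.
move/eqP; rewrite !mulf_eq0 !subr_eq0 => /orP[/orP[]|] /eqP;
  by [apply: Or31 | apply: Or32 | apply: Or33].
Qed.

Definition cyclic_invariants x y z : R * R * R * R :=
  (x + y + z, sigma2 x y z, sigma3 x y z, vandermonde x y z).

Lemma cyclic_invariants_rot x y z :
  cyclic_invariants x y z = cyclic_invariants y z x.
Proof.
by rewrite /cyclic_invariants /sigma2 /sigma3 /vandermonde; congr (_, _, _, _); ring.
Qed.

End SymmetricFunctions.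

Section CyclicPermutations.
Variable R : rcfType.
Implicit Types x y z : R.

Lemma cyclic_perm_rotl x y z q :
  cyclic_perm (y, z, x) q -> cyclic_perm (x, y, z) q.
Proof. by case: q => [[x' y'] z'] /=; tauto. Qed.

Lemma cyclic_perm_of_invariants_eq x y z x' y' z' :
  cyclic_invariants x y z = cyclic_invariants x' y' z' ->
  cyclic_perm (x, y, z) (x', y', z').
Proof.
move=> e; wlog hx : x y z e / x' = x.
  move=> hwlog; move: (e) => -[e1 e2 e3 _].
  case: (root_of_sym_eq e1 e2 e3) => [|hx|hx]; first exact: hwlog.
    apply: cyclic_perm_rotl; apply: (hwlog _ _ _ _ hx).
    by rewrite -e (cyclic_invariants_rot x).
  do 2 apply: cyclic_perm_rotl; apply: (hwlog _ _ _ _ hx).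
  by rewrite -e (cyclic_invariants_rot x) (cyclic_invariants_rot y).
subst x'; move: e => -[e1 e2 _ eV].
have es : y + z = y' + z' by apply: (addrI x); rewrite !addrA.
have ep : y * z = y' * z'.
  have sigma2E a b c : sigma2 a b c = a * (b + c) + b * c by rewrite /sigma2; ring.
  by move: e2; rewrite !sigma2E es => /addrI.
case: (eq_sum_mul2 es ep) => -[ey ez]; subst y' z'; first by left.
have : vandermonde x y z = 0.
  by apply/eqP; rewrite -eqNr -vandermonde_swap -eV.
by case/vandermonde_eq0 => ->; rewrite /cyclic_perm; auto.
Qed.

End CyclicPermutations.

Section F.
Variable R : rcfType.
Implicit Types x y z : R.

Definition F2num x y z : R := 2 * (x ^+ 3 + y ^+ 3 + z ^+ 3) + 12 * x * y * z
  - 3 * (x ^+ 2 * y + y ^+ 2 * x + y ^+ 2 * z + z ^+ 2 * y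
         + z ^+ 2 * x + x ^+ 2 * z).

Lemma Qden_eq0 x y z : (Qden x y z == 0) = (x == y) && (y == z).
Proof.
apply/idP/idP => [/eqP Q0 | /andP[/eqP-> /eqP->]]; last by apply/eqP; rewrite /Qden; ring.
have : 2 * Qden x y z = (x - y) ^+ 2 + (y - z) ^+ 2 + (z - x) ^+ 2 by rewrite /Qden; ring.
rewrite Q0 mulr0 => /esym/eqP.
by rewrite !paddr_eq0 ?addr_ge0 ?sqr_ge0 // !sqrf_eq0 !subr_eq0 => /andP[/andP[-> ->] _].
Qed.

Lemma F2_mulQ x y z : F2 x y z * Qden x y z = F2num x y z.
Proof.
rewrite /F2; case: ifP => [/andP[/eqP-> /eqP->] | nd]; first by rewrite /F2num; ring.
by rewrite divfK // Qden_eq0 nd.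
Qed.

Lemma F3_mulQ x y z :
  F3 x y z * Qden x y z = - 3 * Num.sqrt 3 * vandermonde x y z.
Proof.
rewrite /F3 /vandermonde; case: ifP => [/andP[/eqP-> /eqP->] | nd]; first by ring.
by rewrite divfK ?Qden_eq0 ?nd //; ring.
Qed.

Lemma F2num_vandermonde x y z :
  F2num x y z ^+ 2 + 27 * vandermonde x y z ^+ 2 = 4 * Qden x y z ^+ 3.
Proof. by rewrite /F2num /vandermonde /Qden; ring. Qed.

Lemma F2_F3_sqr x y z : F2 x y z ^+ 2 + F3 x y z ^+ 2 = 4 * Qden x y z.
Proof.
have [Q0 | Qn0] := eqVneq (Qden x y z) 0.
  move/eqP: (Q0); rewrite Qden_eq0 => /andP[/eqP exy /eqP eyz].
  by rewrite Q0 /F2 /F3 exy eyz eqxx /=; ring.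
apply: (mulIf (expf_neq0 2 Qn0)).
have sqrt3 : Num.sqrt 3 ^+ 2 = 3 :> R by rewrite sqr_sqrtr ?ler0n.
rewrite mulrDl -!exprMn F2_mulQ F3_mulQ !exprMn sqrt3.
have -> : 4 * Qden x y z * Qden x y z ^+ 2 = 4 * Qden x y z ^+ 3 by ring.
by rewrite -F2num_vandermonde /vandermonde; ring.
Qed.

Lemma F_rot x y z : F x y z = F y z x.
Proof.
have QdenC : Qden y z x = Qden x y z by rewrite /Qden; ring.
rewrite /F /F1 /F2 /F3 -!Qden_eq0 QdenC.
by case: ifP => _; congr (_, _, _); ring.
Qed.

Lemma sigma2_F1_Qden x y z :
  3 * sigma2 x y z = (x + y + z) ^+ 2 - Qden x y z.
Proof. by rewrite /sigma2 /Qden; ring. Qed.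

Lemma sigma3_F1_F2num x y z :
  27 * sigma3 x y z =
    F2num x y z - 2 * (x + y + z) ^+ 3 + 9 * (x + y + z) * sigma2 x y z.
Proof. by rewrite /sigma3 /sigma2 /F2num; ring. Qed.

End F.

Theorem lemma3 (R : rcfType) (x y z x' y' z' : R) :
  F x y z = F x' y' z' <-> cyclic_perm (x, y, z) (x', y', z').
Proof.
split; last first.
  case=> [[-> -> ->] | [[-> -> ->] | [-> -> ->]]] //; first exact: F_rot.
  by rewrite -F_rot.
rewrite /F /F1 => -[e1 e2 e3].
have eQ : Qden x y z = Qden x' y' z'.
  by apply: (@mulfI _ 4); rewrite ?pnatr_eq0 // -!F2_F3_sqr e2 e3.
have eE : F2num x y z = F2num x' y' z' by rewrite -!F2_mulQ e2 eQ.
have eV : vandermonde x y z = vandermonde x' y' z'.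
  apply: (@mulfI _ (- 3 * Num.sqrt 3)); last by rewrite -!F3_mulQ e3 eQ.
  by rewrite mulf_neq0 ?oppr_eq0 ?pnatr_eq0 // sqrtr_eq0 -ltNge ltr0n.
have e2' : sigma2 x y z = sigma2 x' y' z'.
  by apply: (@mulfI _ 3); rewrite ?pnatr_eq0 // !sigma2_F1_Qden e1 eQ.
have e3' : sigma3 x y z = sigma3 x' y' z'.
  by apply: (@mulfI _ 27); rewrite ?pnatr_eq0 // !sigma3_F1_F2num eE e1 e2'.
by apply: cyclic_perm_of_invariants_eq; rewrite /cyclic_invariants e1 e2' e3' eV.
Qed.
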